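(* In the oracle setting below with $K=3$ populations (sizes $n_1,n_2,n_3$, $n=n_1+n_2+n_3$), run Algorithm BS* on $\mathcal D$, and consider the conditions (A1) $(n_2-n_1)d(\widehat P_1,\widehat P_2)+n_3\{d(\widehat P_1,\widehat P_3)-d(\widehat P_2,\widehat P_3)\}\ge 0$; (A2) $(n_3-n_1)d(\widehat P_1,\widehat P_3)+n_2\{d(\widehat P_1,\widehat P_2)-d(\widehat P_2,\widehat P_3)\}\ge 0$; (A3) $n_1(n_2+n_3-1)\{d(\widehat P_1,\widehat P_3)-d(\widehat P_1,\widehat P_2)\}+(n_3-n_2)(n_1+1)d(\widehat P_2,\widehat P_3)\ge 0$. Then: (a) In the first iteration, transferring an observation from population 1 maximizes $d_w^*(C_1^{(1)},C_2^{(1)})$ if and only if (A1) and (A2) both hold. Furthermore, if (A1) and (A2) hold (and the first transferred observation is from population 1), then in each of the first $n_1$ iterations an observation from population 1 is transferred to $C_1$, and $d_w^*(C_1^{(r)},C_2^{(r)})$ is increasing in $r$ for $r=1,\dots,n_1$. (b) Under (A1) and (A2) (with the first $n_1$ iterations transferring the observations of population 1), transferring an observation from population 2 at iteration $n_1+1$ maximizes $d_w^*(C_1^{(n_1+1)},C_2^{(n_1+1)})$ if and only if (A3) holds. Furthermore, if (A1), (A2), (A3) hold, observations from population 2 are transferred to $C_1$ at iterations $n_1+1,\dots,n_1+n_2$, and $r\mapsto d_w^*(C_1^{(r)},C_2^{(r)})$ is convex on $\{n_1,\dots,n_1+n_2\}$. (c) Under (A1), (A2), (A3), $r\mapsto d_w^*(C_1^{(r)},C_2^{(r)})$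 is decreasing for $r\ge n_1+n_2$.
   Context: Let $k$ be a characteristic kernel on a separable metric space $\mathcal X$ and, for Borel probability measures $P,Q$, $d(P,Q)=\iint k\,dP\,dP+\iint k\,dQ\,dQ-2\iint k\,dP\,dQ$ (squared MMD). Oracle setting: $\mathcal D=\mathcal D_1\cup\dots\cup\mathcal D_K$ (disjoint), $\mathcal D_i$ the $n_i$ observations from population $i$, $\widehat P_i$ the empirical distribution of $\mathcal D_i$, the $\widehat P_i$ being pairwise distinct. For nonempty $S\subseteq\mathcal D$ with $m_i=|S\cap\mathcal D_i|$, $\widetilde P_S=\sum_i\frac{m_i}{|S|}\widehat P_i$; for disjoint nonempty $S_1,S_2$, $d_w^*(S_1,S_2)=\frac{|S_1||S_2|}{|S_1|+|S_2|}d(\widetilde P_{S_1},\widetilde P_{S_2})$. Algorithm BS* on $\mathcal E$: $C_1^{(0)}=\emptyset$, $C_2^{(0)}=\mathcal E$; for $r=1,\dots,|\mathcal E|-1$ choose $c\in C_2^{(r-1)}$ maximizing $d_w^*(C_1^{(r-1)}\cup\{c\},C_2^{(r-1)}\setminus\{c\})$ and set $C_1^{(r)}=C_1^{(r-1)}\cup\{c\}$, $C_2^{(r)}=C_2^{(r-1)}\setminus\{c\}$. ''An observation from population $i$ is transferred at iteration $r$'' means the chosen $c$ lies in $\mathcal D_i$. *)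

From HB Require Import structures.
From mathcomp Require Import all_boot all_order all_algebra.
Set Implicit Arguments. Unset Strict Implicit. Unset Printing Implicit Defensive.
Import Order.TTheory GRing.Theory Num.Theory.
Local Open Scope ring_scope.

(* k is a (symmetric, positive semidefinite) kernel on X which is
   characteristic on finitely supported probability measures: distinct
   finitely supported measures have positive squared MMD. *)
Definition kernel_quad (R : realFieldType) (X : Type) (k : X -> X -> R)
  (N : nat) (y : 'I_N -> X) (c : 'I_N -> R) : R :=
  \sum_(i < N) \sum_(j < N) c i * c j * k (y i) (y j).

Definition char_kernel_fin (R : realFieldType) (X : Type) (k : X -> X -> R) : Prop :=
  [/\ (forall u v, k u v = k v u),
      (forall N (y : 'I_N -> X) (c : 'I_N -> R), 0 <= kernel_quad k y c) &
      (forall N (y : 'I_N -> X) (c : 'I_N -> R), injective y ->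
          \sum_(i < N) c i = 0 -> (exists i, c i != 0) -> 0 < kernel_quad k y c)].

(* The data set D is indexed by a finite type I; observation i has value
   x i : X and belongs to population pop i : 'I_3 (0,1,2 stand for 1,2,3).
   A finitely supported measure sum_i p i * delta_(x i) is represented by its
   weight function p : I -> R. *)

Definition mmd2 (R : realFieldType) (X : Type) (k : X -> X -> R)
  (I : finType) (x : I -> X) (p q : I -> R) : R :=
  \sum_i \sum_j p i * p j * k (x i) (x j)
  + \sum_i \sum_j q i * q j * k (x i) (x j)
  - 2 * \sum_i \sum_j p i * q j * k (x i) (x j).

Definition popset (I : finType) (pop : I -> 'I_3) (a : 'I_3) : {set I} :=
  [set i | pop i == a].

Definition popsize (I : finType) (pop : I -> 'I_3) (a : 'I_3) : nat :=
  #|popset pop a|.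

Definition emp (R : realFieldType) (I : finType) (pop : I -> 'I_3) (a : 'I_3)
  (i : I) : R :=
  (pop i == a)%:R / (popsize pop a)%:R.

Definition emp_mass (R : realFieldType) (X : eqType) (I : finType) (x : I -> X)
  (pop : I -> 'I_3) (a : 'I_3) (z : X) : R :=
  #|[set i | (pop i == a) && (x i == z)]|%:R / (popsize pop a)%:R.

Definition mixS (R : realFieldType) (I : finType) (pop : I -> 'I_3) (S : {set I})
  (i : I) : R :=
  \sum_(a < 3) (#|S :&: popset pop a|%:R / #|S|%:R) * emp R pop a i.

Definition dwstar (R : realFieldType) (X : Type) (k : X -> X -> R)
  (I : finType) (x : I -> X) (pop : I -> 'I_3) (S1 S2 : {set I}) : R :=
  (#|S1| * #|S2|)%:R / (#|S1| + #|S2|)%:R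
  * mmd2 k x (mixS R pop S1) (mixS R pop S2).

Definition BS_run (R : realFieldType) (X : Type) (k : X -> X -> R)
  (I : finType) (x : I -> X) (pop : I -> 'I_3) (E : {set I})
  (C1 C2 : nat -> {set I}) : Prop :=
  C1 0%N = set0 /\ C2 0%N = E /\
  forall r : nat, (1 <= r <= #|E| - 1)%N ->
    exists2 c, c \in C2 r.-1 &
      (forall c', c' \in C2 r.-1 ->
         dwstar k x pop (c' |: C1 r.-1) (C2 r.-1 :\ c')
         <= dwstar k x pop (c |: C1 r.-1) (C2 r.-1 :\ c)) /\
      C1 r = c |: C1 r.-1 /\ C2 r = C2 r.-1 :\ c.

Definition transferred_from (I : finType) (pop : I -> 'I_3)
  (C1 : nat -> {set I}) (r : nat) (a : 'I_3) : Prop :=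
  C1 r :\: C1 r.-1 \subset popset pop a.

Definition p1 : 'I_3 := @Ordinal 3 0 isT.
Definition p2 : 'I_3 := @Ordinal 3 1 isT.
Definition p3 : 'I_3 := @Ordinal 3 2 isT.

(* For a nonempty proper subset S of the data, the mixture weights of
   \tilde P_S and \tilde P_{D \ S} differ by a zero-sum vector u, and for such
   u the squared MMD norm of sum_a u_a \hat P_a is
   -(u1 u2 d12 + u1 u3 d13 + u2 u3 d23).  So d_w^*(S, D \ S) is an explicit
   rational function [dwc] of the three counts |S :&: D_a| and of the three
   distances d_ab only.  A step of BS* compares the values of [dwc] at the
   count vectors reachable by one transfer, and each claim reduces to the sign
   of a difference of two such values: a rational function whose numerator is
   controlled by (A1)-(A3) and by d_ab > 0.  The kernel enters only through
   d_ab > 0, which holds because k is characteristic and the \hat P_a are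
   pairwise distinct. *)

From HB Require Import structures.
From mathcomp Require Import all_boot all_order all_algebra.
From mathcomp Require Import ring lra zify.
Set Implicit Arguments.
Unset Strict Implicit.
Unset Printing Implicit Defensive.
Import Order.TTheory GRing.Theory Num.Theory.
Local Open Scope ring_scope.

(** * d_w^* as a function of the population counts *)

Lemma recip_midpoint_convex (R : realFieldType) (a b m S : R) :
  0 <= a -> 0 <= b -> 1 < S -> S + 1 < m ->
  2 * (a / S + b / (m - S))
    <= (a / (S - 1) + b / (m - (S - 1))) + (a / (S + 1) + b / (m - (S + 1))).
Proof.
move=> a_ge0 b_ge0 S_gt1 S_lt; rewrite -subr_ge0.
rewrite (_ : _ - _ = 2 * a / ((S - 1) * S * (S + 1))
                     + 2 * b / ((m - S - 1) * (m - S) * (m - S + 1))).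
  by rewrite addr_ge0 // divr_ge0 ?mulr_ge0 //; lra.
field; repeat (apply/andP; split); apply: lt0r_neq0; lra.
Qed.

Section SplitValue.
Variables (R : realFieldType) (d12 d13 d23 n1 n2 n3 : R).
Local Notation nn := (n1 + n2 + n3).

Definition dquad (u1 u2 u3 : R) : R := - (u1 * u2 * d12 + u1 * u3 * d13 + u2 * u3 * d23).

(* d_w^*(S, D \ S) when S contains a_b observations of population b, see
   [dwcE] and [dwstar_split]. *)
Definition dwc (a1 a2 a3 : R) : R :=
  dquad (nn * a1 - (a1 + a2 + a3) * n1) (nn * a2 - (a1 + a2 + a3) * n2)
        (nn * a3 - (a1 + a2 + a3) * n3) / (nn * (a1 + a2 + a3) * (nn - (a1 + a2 + a3))).

Definition condA1 : R := (n2 - n1) * d12 + n3 * (d13 - d23).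
Definition condA2 : R := (n3 - n1) * d13 + n2 * (d12 - d23).
Definition condA3 : R := n1 * (n2 + n3 - 1) * (d13 - d12) + (n3 - n2) * (n1 + 1) * d23.

Lemma dwcE a1 a2 a3 : 0 < a1 + a2 + a3 < nn ->
  (a1 + a2 + a3) * (nn - (a1 + a2 + a3)) / ((a1 + a2 + a3) + (nn - (a1 + a2 + a3)))
  * dquad (a1 / (a1 + a2 + a3) - (n1 - a1) / (nn - (a1 + a2 + a3)))
          (a2 / (a1 + a2 + a3) - (n2 - a2) / (nn - (a1 + a2 + a3)))
          (a3 / (a1 + a2 + a3) - (n3 - a3) / (nn - (a1 + a2 + a3)))
  = dwc a1 a2 a3.
Proof.
case/andP=> s_gt0 s_lt; rewrite /dwc /dquad; field.
by rewrite !lt0r_neq0 ?subr_gt0 // (lt_trans s_gt0).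
Qed.

Hypothesis n_ge1 : [/\ 1 <= n1, 1 <= n2 & 1 <= n3].
Hypothesis d_gt0 : [/\ 0 < d12, 0 < d13 & 0 < d23].

(* [lra] does not see section hypotheses. *)
Local Ltac nlra := case: n_ge1 => *; lra.
Local Ltac unfold_defs := rewrite /dwc /dquad /condA1 /condA2 /condA3.
Local Ltac neq0 := repeat (apply/andP; split); apply: lt0r_neq0; nlra.

Lemma dwc_first_pop1_ge_pop2 : (dwc 0 1 0 <= dwc 1 0 0) = (0 <= condA1).
Proof.
rewrite -subr_ge0 (_ : _ - _ = condA1 / (nn - 1)); first by rewrite pmulr_lge0 // invr_gt0; nlra.
unfold_defs; field; neq0.
Qed.

Lemma dwc_first_pop1_ge_pop3 : (dwc 0 0 1 <= dwc 1 0 0) = (0 <= condA2).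
Proof.
rewrite -subr_ge0 (_ : _ - _ = condA2 / (nn - 1)); first by rewrite pmulr_lge0 // invr_gt0; nlra.
unfold_defs; field; neq0.
Qed.

Lemma dwc_second_pop2_ge_pop3 : (dwc n1 0 1 <= dwc n1 1 0) = (0 <= condA3).
Proof.
rewrite -subr_ge0 (_ : _ - _ = condA3 / ((n1 + 1) * (nn - n1 - 1))).
  by rewrite pmulr_lge0 // invr_gt0; apply: mulr_gt0; nlra.
unfold_defs; field; neq0.
Qed.

Lemma dwc_pop1_beats_pop2 r : 1 <= r -> r + 1 <= n1 -> 0 <= condA1 ->
  dwc r 1 0 < dwc (r + 1) 0 0.
Proof.
case: d_gt0 => d12_gt0 _ _ r_ge1 r_lt A1_ge0; rewrite -subr_gt0.
rewrite (_ : _ - _ = (r * nn * d12 + (r + 1) * condA1) / ((r + 1) * (nn - r - 1))).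
  apply: divr_gt0; last by apply: mulr_gt0; nlra.
  have : 0 < r * nn * d12 by rewrite !mulr_gt0 //; nlra.
  have : 0 <= (r + 1) * condA1 by rewrite mulr_ge0 //; nlra.
  nlra.
unfold_defs; field; neq0.
Qed.

Lemma dwc_pop1_beats_pop3 r : 1 <= r -> r + 1 <= n1 -> 0 <= condA2 ->
  dwc r 0 1 < dwc (r + 1) 0 0.
Proof.
case: d_gt0 => _ d13_gt0 _ r_ge1 r_lt A2_ge0; rewrite -subr_gt0.
rewrite (_ : _ - _ = (r * nn * d13 + (r + 1) * condA2) / ((r + 1) * (nn - r - 1))).
  apply: divr_gt0; last by apply: mulr_gt0; nlra.
  have : 0 < r * nn * d13 by rewrite !mulr_gt0 //; nlra.
  have : 0 <= (r + 1) * condA2 by rewrite mulr_ge0 //; nlra.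
  nlra.
unfold_defs; field; neq0.
Qed.

Lemma dwc_pop1_increasing r : 1 <= r -> r + 1 <= n1 -> 0 <= condA1 ->
  dwc r 0 0 < dwc (r + 1) 0 0.
Proof.
case: d_gt0 => d12_gt0 d13_gt0 _ r_ge1 r_lt A1_ge0; rewrite -subr_gt0.
rewrite (_ : _ - _ = (n2 * condA1 + n2 * (n1 + n3) * d12 + n3 ^+ 2 * d13)
                     / ((nn - r) * (nn - r - 1))).
  apply: divr_gt0; last by apply: mulr_gt0; nlra.
  have : 0 <= n2 * condA1 by rewrite mulr_ge0 //; nlra.
  have : 0 < n2 * (n1 + n3) * d12 by rewrite !mulr_gt0 //; nlra.
  have : 0 < n3 ^+ 2 * d13 by rewrite mulr_gt0 // exprn_gt0; nlra.
  nlra.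
unfold_defs; field; neq0.
Qed.

Lemma dwc_pop2_beats_pop3 s : 1 <= s -> s + 1 <= n2 -> 0 <= condA3 ->
  dwc n1 s 1 < dwc n1 (s + 1) 0.
Proof.
case: d_gt0 => _ _ d23_gt0 s_ge1 s_lt A3_ge0; rewrite -subr_gt0.
pose E := n1 * (d12 - d13) + (n1 + 2 * n3) * d23.
rewrite (_ : _ - _ = (condA3 + s * E) / ((n1 + s + 1) * (nn - n1 - s - 1))); last first.
  by unfold_defs; rewrite /E; field; neq0.
apply: divr_gt0; last by apply: mulr_gt0; nlra.
(* [condA3 + s * E] is affine in [s]: nonnegative at [s = 0] by (A3), and
   positive at [s = n2 + n3 - 1] by the identity below. *)
have A3E : condA3 = (2 * n3 - 1) * nn * d23 - (n2 + n3 - 1) * E by rewrite /condA3 /E; ring.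
have : 0 < (2 * n3 - 1) * nn * d23 by rewrite !mulr_gt0 //; nlra.
case: (lerP E 0) => [E_le0 | E_gt0].
  have : (n2 + n3 - 1 - s) * E <= 0 by rewrite mulr_ge0_le0 //; nlra.
  have -> : condA3 + s * E = (2 * n3 - 1) * nn * d23 - (n2 + n3 - 1 - s) * E.
    by rewrite A3E; ring.
  nlra.
have : 0 < s * E by rewrite mulr_gt0 //; nlra.
nlra.
Qed.

Lemma dwc_pop3_decreasing t : 0 <= t -> t + 1 < n3 -> 0 <= condA3 ->
  dwc n1 n2 (t + 1) < dwc n1 n2 t.
Proof.
case: d_gt0 => _ d13_gt0 d23_gt0 t_ge0 t_lt A3_ge0; rewrite -subr_gt0.
pose H3 := n1 ^+ 2 * d13 + n2 ^+ 2 * d23 + n1 * n2 * (d13 + d23 - d12).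
rewrite (_ : _ - _ = H3 / ((n1 + n2 + t) * (n1 + n2 + t + 1))); last first.
  by unfold_defs; rewrite /H3; field; neq0.
apply: divr_gt0; last by apply: mulr_gt0; nlra.
pose c := n1 * (2 * n2 - 1) + n2 ^+ 2 + n3 * (n2 - 1).
have H3E : (n2 + n3 - 1) * H3 = n2 * condA3 + (n2 + n3 - 1) * n1 ^+ 2 * d13 + n2 * c * d23.
  by rewrite /H3 /condA3 /c; ring.
rewrite -(pmulr_rgt0 _ (_ : 0 < n2 + n3 - 1)) ?H3E; last by nlra.
have : 0 <= n2 * condA3 by rewrite mulr_ge0 //; nlra.
have : 0 < (n2 + n3 - 1) * n1 ^+ 2 * d13 by rewrite !mulr_gt0 ?exprn_gt0 //; nlra.
have : 0 < c.
  have : 0 < n1 * (2 * n2 - 1) by rewrite mulr_gt0 //; nlra.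
  have : 0 <= n3 * (n2 - 1) by rewrite mulr_ge0 //; nlra.
  have : 0 < n2 ^+ 2 by rewrite exprn_gt0 //; nlra.
  rewrite /c; nlra.
move=> c_gt0; have : 0 < n2 * c * d23 by rewrite !mulr_gt0 //; nlra.
nlra.
Qed.

Lemma dwc_pop2_convex s : 1 <= s -> s + 1 <= n2 ->
  2 * dwc n1 s 0 <= dwc n1 (s - 1) 0 + dwc n1 (s + 1) 0.
Proof.
case: d_gt0 => d12_gt0 _ d23_gt0 s_ge1 s_lt.
pose H2 := n1 * (n1 + n3) * d12 - n1 * n3 * d13 + (n1 + n3) * n3 * d23.
have partial_fractions u : 0 <= u -> u <= n2 -> dwc n1 u 0
    = n1 ^+ 2 * d12 / (n1 + u) + n3 ^+ 2 * d23 / (nn - (n1 + u)) - H2 / nn.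
  by move=> u_ge0 u_le; unfold_defs; rewrite /H2; field; neq0.
rewrite !partial_fractions ?addrA; try nlra.
have a_ge0 : 0 <= n1 ^+ 2 * d12 by rewrite mulr_ge0 ?sqr_ge0 ?ltW.
have b_ge0 : 0 <= n3 ^+ 2 * d23 by rewrite mulr_ge0 ?sqr_ge0 ?ltW.
have := recip_midpoint_convex a_ge0 b_ge0 (_ : 1 < n1 + s) (_ : n1 + s + 1 < nn).
by move=> convex; nlra.
Qed.

End SplitValue.

(** * Kernel inner products of weighted data *)

Section KernelInnerProduct.
Variables (R : realFieldType) (X : eqType) (k : X -> X -> R) (I : finType) (x : I -> X).

Definition kdot (p q : I -> R) : R := \sum_i \sum_j p i * q j * k (x i) (x j).

Lemma eq_kdot p p' q q' : p =1 p' -> q =1 q' -> kdot p q = kdot p' q'.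
Proof. by move=> eq_p eq_q; apply: eq_bigr => i _; apply: eq_bigr => j _; rewrite eq_p eq_q. Qed.

Lemma kdot_suml (J : finType) (w : J -> R) (f : J -> I -> R) q :
  kdot (fun i => \sum_b w b * f b i) q = \sum_b w b * kdot (f b) q.
Proof.
rewrite /kdot; under eq_bigr do under eq_bigr do rewrite !mulr_suml.
under eq_bigr do rewrite exchange_big /=.
rewrite exchange_big; apply: eq_bigr => b _; rewrite mulr_sumr.
by apply: eq_bigr => i _; rewrite mulr_sumr; apply: eq_bigr => j _; rewrite !mulrA.
Qed.

Lemma kdotBl p q w : kdot (fun i => p i - q i) w = kdot p w - kdot q w.
Proof.
rewrite /kdot -sumrB; apply: eq_bigr => i _.
by rewrite -sumrB; apply: eq_bigr => j _; rewrite !mulrBl.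
Qed.

Hypothesis k_sym : forall u v, k u v = k v u.

Lemma kdotC p q : kdot p q = kdot q p.
Proof.
rewrite /kdot exchange_big; apply: eq_bigr => i _; apply: eq_bigr => j _.
by rewrite k_sym [p _ * _]mulrC.
Qed.

Lemma kdotBr p q w : kdot w (fun i => p i - q i) = kdot w p - kdot w q.
Proof. by rewrite kdotC kdotBl !(kdotC w). Qed.

Lemma mmd2_kdot p q : mmd2 k x p q = kdot (fun i => p i - q i) (fun i => p i - q i).
Proof. by rewrite kdotBl !kdotBr (kdotC q p) /mmd2 /kdot; ring. Qed.

Lemma mmd2_mixture (J : finType) (w v : J -> R) (f : J -> I -> R) :
  mmd2 k x (fun i => \sum_b w b * f b i) (fun i => \sum_b v b * f b i)
  = \sum_b \sum_c (w b - v b) * (w c - v c) * kdot (f b) (f c).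
Proof.
rewrite mmd2_kdot.
have diff : (fun i => \sum_b w b * f b i - \sum_b v b * f b i)
            =1 (fun i => \sum_b (w b - v b) * f b i).
  by move=> i; rewrite -sumrB; apply: eq_bigr => b _; rewrite mulrBl.
rewrite (eq_kdot diff diff) kdot_suml; apply: eq_bigr => b _.
rewrite kdotC kdot_suml mulr_sumr; apply: eq_bigr => c _.
by rewrite kdotC mulrA.
Qed.

Hypothesis k_pos : forall N (y : 'I_N -> X) (c : 'I_N -> R), injective y ->
  \sum_(i < N) c i = 0 -> (exists i, c i != 0) -> 0 < kernel_quad k y c.

Lemma kdot_pushforward p N (f : I -> 'I_N) (y : 'I_N -> X) :
  (forall i, y (f i) = x i) ->
  kdot p p = kernel_quad k y (fun j => \sum_(i | f i == j) p i).
Proof.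
move=> yf; rewrite /kernel_quad /kdot (partition_big f xpredT) //=.
apply: eq_bigr => j _.
under eq_bigr do rewrite (partition_big f xpredT) //=.
rewrite exchange_big; apply: eq_bigr => l _.
rewrite !mulr_suml; apply: eq_bigr => i /eqP fi.
rewrite mulr_sumr mulr_suml; apply: eq_bigr => i' /eqP fi'.
by rewrite -fi -fi' !yf.
Qed.

Lemma kdot_gt0 p : \sum_i p i = 0 -> (exists z, \sum_(i | x i == z) p i != 0) -> 0 < kdot p p.
Proof.
move=> sum_p [z mass_z].
have [i0 /eqP xi0] : exists i0, x i0 == z.
  apply/existsP; apply: contraR mass_z => /existsPn none.
  by rewrite big_pred0 // => i; apply/negbTE/none.
pose L := undup [seq x i | i <- enum I].
have memL i : x i \in L by rewrite mem_undup; apply: map_f; rewrite mem_enum.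
pose f i : 'I_(size L) := Ordinal (etrans (index_mem _ _) (memL i)).
pose y (j : 'I_(size L)) := nth (x i0) L j.
have yf i : y (f i) = x i by rewrite /y /= nth_index.
have y_inj : injective y.
  by move=> j1 j2 /eqP; rewrite /y nth_uniq ?undup_uniq // => /eqP; apply: val_inj.
rewrite (kdot_pushforward p yf); apply: k_pos => //.
  by rewrite -[RHS]sum_p (partition_big f xpredT).
exists (f i0); rewrite (eq_bigl (fun i => x i == z)) // => i.
rewrite -xi0; apply/eqP/eqP => [fi|xi]; first by rewrite -yf fi yf.
by apply: val_inj; rewrite /= xi.
Qed.

Lemma mmd2_gt0 p q : \sum_i p i = \sum_i q i ->
  (exists z, \sum_(i | x i == z) p i != \sum_(i | x i == z) q i) -> 0 < mmd2 k x p q.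
Proof.
move=> sum_pq [z mass_z]; rewrite mmd2_kdot; apply: kdot_gt0.
  by rewrite sumrB sum_pq subrr.
by exists z; rewrite sumrB subr_eq0.
Qed.

End KernelInnerProduct.

(** * Population counts *)

Lemma ord3P (a : 'I_3) : [\/ a = p1, a = p2 | a = p3].
Proof.
by case: a => [[|[|[|m]]] lt_a3] //; [constructor 1 | constructor 2 | constructor 3];
  apply: val_inj.
Qed.

Lemma sum_ord3 (V : nmodType) (F : 'I_3 -> V) : \sum_(a < 3) F a = F p1 + F p2 + F p3.
Proof. by rewrite !big_ord_recr big_ord0 /= add0r; congr (F _ + F _ + F _); apply: val_inj. Qed.

Lemma gram3_dquad (R : realFieldType) (G : 'I_3 -> 'I_3 -> R) (u : 'I_3 -> R) :
  (forall a b, G a b = G b a) -> \sum_a u a = 0 ->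
  \sum_a \sum_b u a * u b * G a b
  = dquad (G p1 p1 + G p2 p2 - 2 * G p1 p2) (G p1 p1 + G p3 p3 - 2 * G p1 p3)
          (G p2 p2 + G p3 p3 - 2 * G p2 p3) (u p1) (u p2) (u p3).
Proof.
move=> G_sym; rewrite !sum_ord3 => u_sum0.
have -> : u p3 = - (u p1 + u p2) by lra.
by rewrite (G_sym p2 p1) (G_sym p3 p1) (G_sym p3 p2) /dquad; ring.
Qed.

Section Populations.
Variables (I : finType) (pop : I -> 'I_3).

Definition popcount (S : {set I}) (a : 'I_3) : nat := #|S :&: popset pop a|.

Lemma card_popcount (S : {set I}) : #|S| = (\sum_(a < 3) popcount S a)%N.
Proof.
rewrite -sum1_card (partition_big pop xpredT) //=; apply: eq_bigr => a _.
by rewrite /popcount -sum1_card; apply: eq_bigl => i; rewrite !inE.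
Qed.

Lemma card_popsize : #|I| = (popsize pop p1 + popsize pop p2 + popsize pop p3)%N.
Proof.
rewrite -cardsT card_popcount !big_ord_recr big_ord0 /= /popcount !setTI.
by congr (#|popset pop _| + #|popset pop _| + #|popset pop _|)%N; apply: val_inj.
Qed.

Lemma popcount_le (S : {set I}) a : (popcount S a <= popsize pop a)%N.
Proof. exact/subset_leq_card/subsetIr. Qed.

Lemma popcount_setC (S : {set I}) a : popcount (~: S) a = (popsize pop a - popcount S a)%N.
Proof.
rewrite /popcount /popsize -(cardsID S (popset pop a)) (setIC S) addKn.
by apply: eq_card => i; rewrite !inE andbC.
Qed.

Lemma popcount_setU1 (S : {set I}) c a : c \notin S ->
  popcount (c |: S) a = (popcount S a + (pop c == a))%N.
Proof.
move=> c_notin; rewrite /popcount setIUl; case: (boolP (pop c == a)) => [c_a | c_na].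
  by rewrite (setIidPl _) ?sub1set ?inE // cardsU1 !inE (negbTE c_notin) addnC.
rewrite (_ : [set c] :&: _ = set0) ?set0U ?addn0 //.
by apply/setP => i; rewrite !inE; case: eqP => // ->; rewrite (negbTE c_na).
Qed.

Lemma popcount_lt (S : {set I}) c : c \notin S -> (popcount S (pop c) < popsize pop (pop c))%N.
Proof.
by move=> c_notin; have := popcount_le (c |: S) (pop c); rewrite popcount_setU1 // eqxx addn1.
Qed.

Lemma popcount_ltP (S : {set I}) a :
  (popcount S a < popsize pop a)%N -> exists2 c, c \notin S & pop c = a.
Proof.
move=> lt_a; have : ~~ (popset pop a \subset S).
  by apply: contraL lt_a => /setIidPr; rewrite /popcount setIC => ->; rewrite ltnn.
by case/subsetPn => c; rewrite inE => /eqP <-; exists c.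
Qed.

End Populations.

Lemma sum_indicator (R : realFieldType) (I : finType) (A : {set I}) :
  \sum_i ((i \in A)%:R : R) = #|A|%:R.
Proof.
rewrite -natr_sum -sum1_card; congr _%:R.
by rewrite [RHS]big_mkcond; apply: eq_bigr => i _; case: (i \in A).
Qed.

Section EmpiricalSplit.
Variables (R : realFieldType) (X : eqType) (k : X -> X -> R) (I : finType) (x : I -> X).
Variable pop : I -> 'I_3.
Hypothesis pop_nonempty : forall a, (0 < popsize pop a)%N.

Local Notation dist a b := (mmd2 k x (emp R pop a) (emp R pop b)).
Local Notation nR a := ((popsize pop a)%:R : R).

Definition dw_counts (a1 a2 a3 : nat) : R :=
  dwc (dist p1 p2) (dist p1 p3) (dist p2 p3) (nR p1) (nR p2) (nR p3) a1%:R a2%:R a3%:R.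

Lemma sum_emp a : \sum_i emp R pop a i = 1.
Proof.
rewrite -mulr_suml (eq_bigr (fun i => (i \in popset pop a)%:R)) ?sum_indicator.
  by rewrite divff // pnatr_eq0 -lt0n pop_nonempty.
by move=> i _; rewrite inE.
Qed.

Lemma emp_massE a z : \sum_(i | x i == z) emp R pop a i = emp_mass R x pop a z.
Proof.
rewrite /emp_mass -mulr_suml big_mkcond; congr (_ / _); rewrite -sum_indicator.
by apply: eq_bigr => i _; rewrite inE andbC; case: (x i == z).
Qed.

Hypothesis k_sym : forall u v, k u v = k v u.

Lemma dwstar_split (S : {set I}) : (0 < #|S| < #|I|)%N ->
  dwstar k x pop S (~: S) = dw_counts (popcount pop S p1) (popcount pop S p2) (popcount pop S p3).
Proof.
case/andP=> S_gt0 S_lt.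
have G_sym a b : kdot k x (emp R pop a) (emp R pop b) = kdot k x (emp R pop b) (emp R pop a).
  exact: kdotC.
have SC_gt0 : (0 < #|~: S|)%N by rewrite cardsCs setCK subn_gt0.
have weights_sum1 (T : {set I}) : (0 < #|T|)%N ->
    \sum_(a < 3) #|T :&: popset pop a|%:R / #|T|%:R = 1 :> R.
  move=> T_gt0; rewrite -mulr_suml -natr_sum -(card_popcount pop T).
  by rewrite divff // pnatr_eq0 -lt0n.
rewrite /dwstar /mixS (mmd2_mixture x k_sym) (gram3_dquad G_sym); last first.
  by rewrite sumrB !weights_sum1 ?subrr.
have cardS : #|S|%:R = \sum_(a < 3) (popcount pop S a)%:R :> R.
  by rewrite (card_popcount pop S) -natr_sum.
have cardSC : #|~: S|%:R = \sum_(a < 3) (popsize pop a)%:R - #|S|%:R :> R.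
  rewrite -[#|~: S|](addKn #|S|) cardsC natrB ?(ltnW S_lt) //.
  by rewrite (card_popsize pop) !natrD sum_ord3.
have popSC a : #|~: S :&: popset pop a|%:R
               = (popsize pop a)%:R - (popcount pop S a)%:R :> R.
  by rewrite -natrB ?popcount_le // -popcount_setC.
rewrite sum_ord3 in cardS; rewrite sum_ord3 in cardSC.
rewrite /dw_counts -dwcE; last first.
  by rewrite -cardS ltr0n S_gt0 -subr_gt0 -cardSC ltr0n.
by rewrite natrM natrD cardSC !popSC cardS.
Qed.

Hypothesis k_pos : forall N (y : 'I_N -> X) (c : 'I_N -> R), injective y ->
  \sum_(i < N) c i = 0 -> (exists i, c i != 0) -> 0 < kernel_quad k y c.

Lemma dist_gt0 a b : (exists z, emp_mass R x pop a z != emp_mass R x pop b z) -> 0 < dist a b.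
Proof.
case=> z mass_z; apply: (mmd2_gt0 k_sym k_pos); first by rewrite !sum_emp.
by exists z; rewrite !emp_massE.
Qed.

End EmpiricalSplit.

(** * Runs of BS* *)

Lemma transferred_fromU1 (I : finType) (pop : I -> 'I_3) (C1 : nat -> {set I}) r c :
  c \notin C1 r.-1 -> C1 r = c |: C1 r.-1 -> forall a, transferred_from pop C1 r a <-> pop c = a.
Proof.
move=> c_notin C1r a; rewrite /transferred_from C1r setDUl setDv setU0.
rewrite (_ : [set c] :\: _ = [set c]) ?sub1set ?inE; first by split => /eqP.
by apply/setDidPl; rewrite disjoints1.
Qed.

Section GreedyStep.
Variables (R : realFieldType) (X : eqType) (k : X -> X -> R) (I : finType) (x : I -> X).
Variable pop : I -> 'I_3.

Definition has_counts (S : {set I}) (a1 a2 a3 : nat) : Prop :=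
  [/\ popcount pop S p1 = a1, popcount pop S p2 = a2 & popcount pop S p3 = a3].

Definition dw_after (S : {set I}) (b : 'I_3) : R :=
  dw_counts k x pop (popcount pop S p1 + (b == p1)) (popcount pop S p2 + (b == p2))
                    (popcount pop S p3 + (b == p3)).

Lemma has_counts_set0 : has_counts set0 0 0 0.
Proof. by rewrite /has_counts /popcount !set0I cards0. Qed.

Lemma has_counts_setU1 (S : {set I}) c a1 a2 a3 : c \notin S -> has_counts S a1 a2 a3 ->
  has_counts (c |: S) (a1 + (pop c == p1)) (a2 + (pop c == p2)) (a3 + (pop c == p3)).
Proof. by move=> c_notin [<- <- <-]; split; rewrite popcount_setU1. Qed.

Lemma dw_after_counts (S : {set I}) a1 a2 a3 : has_counts S a1 a2 a3 ->
  [/\ dw_after S p1 = dw_counts k x pop a1.+1 a2 a3,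
      dw_after S p2 = dw_counts k x pop a1 a2.+1 a3
    & dw_after S p3 = dw_counts k x pop a1 a2 a3.+1].
Proof. by case=> e1 e2 e3; rewrite /dw_after e1 e2 e3 /= !addn0 !addn1. Qed.

Lemma greedy_pop (S : {set I}) c a : c \notin S ->
  (forall c', c' \notin S -> dw_after S (pop c') <= dw_after S (pop c)) ->
  (popcount pop S a < popsize pop a)%N ->
  (forall b, b != a -> (popcount pop S b < popsize pop b)%N -> dw_after S b < dw_after S a) ->
  pop c = a.
Proof.
move=> c_notin c_max a_avail a_best; apply/eqP/negPn/negP => c_na.
have [c' c'_notin c'_a] := popcount_ltP a_avail.
by have := c_max c' c'_notin; rewrite c'_a leNgt (a_best _ c_na (popcount_lt pop c_notin)).
Qed.

Hypothesis k_sym : forall u v, k u v = k v u.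

Lemma dwstar_setU1 (S : {set I}) c : c \notin S -> (#|S|.+1 < #|I|)%N ->
  dwstar k x pop (c |: S) (~: (c |: S)) = dw_after S (pop c).
Proof.
move=> c_notin S_lt; rewrite dwstar_split // ?cardsU1 ?c_notin //.
by rewrite /dw_after !popcount_setU1.
Qed.

End GreedyStep.

Section BSRun.
Variables (R : realFieldType) (X : eqType) (k : X -> X -> R) (I : finType) (x : I -> X).
Variable pop : I -> 'I_3.
Hypothesis pop_nonempty : forall a, (0 < popsize pop a)%N.
Hypothesis k_sym : forall u v, k u v = k v u.
Variables C1 C2 : nat -> {set I}.
Hypothesis run : BS_run k x pop [set: I] C1 C2.

Lemma run_state r : (r <= #|I| - 1)%N -> C2 r = ~: C1 r /\ #|C1 r| = r.
Proof.
case: run => C10 [C20 run_r].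
elim: r => [|r IH] r_le; first by rewrite C10 C20 setC0 cards0.
have [|c c_in [_ [C1r C2r]]] := run_r r.+1; first by rewrite cardsT r_le.
have [C2r' card_r] := IH (ltnW r_le); move: c_in; rewrite /= C2r' inE => c_notin.
by rewrite C1r C2r C2r' cardsU1 c_notin card_r setDE setCU setIC.
Qed.

Lemma run_candidate r c : (r < #|I| - 1)%N -> c \notin C1 r ->
  dwstar k x pop (c |: C1 r) (C2 r :\ c) = dw_after k x pop (C1 r) (pop c).
Proof.
move=> r_lt c_notin; have [C2r card_r] := run_state (ltnW r_lt).
rewrite C2r setDE setIC -setCU dwstar_setU1 // card_r; lia.
Qed.

Lemma run_step r : (1 <= r <= #|I| - 1)%N ->
  exists2 c, c \notin C1 r.-1 & C1 r = c |: C1 r.-1 /\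
    forall c', c' \notin C1 r.-1 ->
      dw_after k x pop (C1 r.-1) (pop c') <= dw_after k x pop (C1 r.-1) (pop c).
Proof.
case/andP=> r_ge1 r_le; case: run => _ [_ run_r].
have [|c c_in [c_max [C1r _]]] := run_r r; first by rewrite cardsT r_ge1 r_le.
have r1_lt : (r.-1 < #|I| - 1)%N by lia.
have [C2r _] := run_state (ltnW r1_lt).
move: c_in; rewrite C2r inE => c_notin; exists c => //; split => // c' c'_notin.
by rewrite -!run_candidate // c_max // C2r inE.
Qed.

Lemma run_value r a1 a2 a3 : (1 <= r <= #|I| - 1)%N -> has_counts pop (C1 r) a1 a2 a3 ->
  dwstar k x pop (C1 r) (C2 r) = dw_counts k x pop a1 a2 a3.
Proof.
case/andP=> r_ge1 r_le [e1 e2 e3]; have [C2r card_r] := run_state r_le.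
by rewrite C2r dwstar_split ?e1 ?e2 ?e3 // card_r; apply/andP; split; lia.
Qed.

Lemma run_transfer r a a1 a2 a3 : (1 <= r <= #|I| - 1)%N ->
  has_counts pop (C1 r.-1) a1 a2 a3 -> transferred_from pop C1 r a ->
  has_counts pop (C1 r) (a1 + (a == p1)) (a2 + (a == p2)) (a3 + (a == p3)).
Proof.
move=> r_range counts; have [c c_notin [C1r _]] := run_step r_range.
by move/(transferred_fromU1 pop c_notin C1r) => <-; rewrite C1r; apply: has_counts_setU1.
Qed.

Lemma run_greedy r a : (1 <= r <= #|I| - 1)%N ->
  (popcount pop (C1 r.-1) a < popsize pop a)%N ->
  (forall b, b != a -> (popcount pop (C1 r.-1) b < popsize pop b)%N ->
     dw_after k x pop (C1 r.-1) b < dw_after k x pop (C1 r.-1) a) ->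
  transferred_from pop C1 r a.
Proof.
move=> r_range a_avail a_best; have [c c_notin [C1r c_max]] := run_step r_range.
exact/(transferred_fromU1 pop c_notin C1r)/(greedy_pop c_notin c_max a_avail a_best).
Qed.

Hypothesis k_pos : forall N (y : 'I_N -> X) (c : 'I_N -> R), injective y ->
  \sum_(i < N) c i = 0 -> (exists i, c i != 0) -> 0 < kernel_quad k y c.
Hypothesis emp_distinct : forall a b : 'I_3, a != b ->
  exists z : X, emp_mass R x pop a z != emp_mass R x pop b z.

Local Notation N1 := (popsize pop p1).
Local Notation N2 := (popsize pop p2).
Local Notation N3 := (popsize pop p3).
Local Notation d a b := (mmd2 k x (emp R pop a) (emp R pop b)).
Local Notation A1 := (condA1 (d p1 p2) (d p1 p3) (d p2 p3) N1%:R N2%:R N3%:R).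
Local Notation A2 := (condA2 (d p1 p2) (d p1 p3) (d p2 p3) N1%:R N2%:R N3%:R).
Local Notation A3 := (condA3 (d p1 p2) (d p1 p3) (d p2 p3) N1%:R N2%:R N3%:R).

Lemma popsizes_ge1 : [/\ 1 <= N1%:R :> R, 1 <= N2%:R :> R & 1 <= N3%:R :> R].
Proof. by rewrite !ler1n !pop_nonempty. Qed.

Lemma dists_gt0 : [/\ 0 < d p1 p2, 0 < d p1 p3 & 0 < d p2 p3].
Proof. by split; apply: (dist_gt0 pop_nonempty k_sym k_pos); apply: emp_distinct. Qed.

Local Ltac size_lia :=
  move: (card_popsize pop) (pop_nonempty p1) (pop_nonempty p2) (pop_nonempty p3) => *; lia.

Lemma run_counts0 : has_counts pop (C1 0) 0 0 0.
Proof. by case: run => -> _; exact: has_counts_set0. Qed.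

Lemma first_pick_pop1 :
  (exists2 c, c \in popset pop p1 & forall c',
     dwstar k x pop [set c'] ([set: I] :\ c') <= dwstar k x pop [set c] ([set: I] :\ c))
  <-> 0 <= A1 /\ 0 <= A2.
Proof.
have value c : dwstar k x pop [set c] ([set: I] :\ c) = dw_after k x pop set0 (pop c).
  by rewrite setTD -(setU0 [set c]) dwstar_setU1 ?inE ?cards0 //; size_lia.
have [after1 after2 after3] := dw_after_counts k x (has_counts_set0 pop).
rewrite /dw_counts ?mulr0n ?mulr1n in after1 after2 after3.
have init12 := dwc_first_pop1_ge_pop2 (d p1 p2) (d p1 p3) (d p2 p3) popsizes_ge1.
have init13 := dwc_first_pop1_ge_pop3 (d p1 p2) (d p1 p3) (d p2 p3) popsizes_ge1.
have avail a : exists2 c, c \notin set0 & pop c = a.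
  by apply: popcount_ltP; rewrite /popcount set0I cards0.
split.
  case=> c; rewrite inE => /eqP c_p1 c_max.
  have [c2 _ c2_p2] := avail p2; have [c3 _ c3_p3] := avail p3.
  have := c_max c2; have := c_max c3.
  by rewrite !value c_p1 c2_p2 c3_p3 after1 after2 after3 init12 init13.
case=> A1_ge0 A2_ge0; have [c _ c_p1] := avail p1.
exists c => [|c']; first by rewrite inE c_p1.
rewrite !value c_p1; case: (ord3P (pop c')) => ->.
- exact: le_refl.
- by rewrite after1 after2 init12.
- by rewrite after1 after3 init13.
Qed.

Section PhaseOne.
Hypotheses (A1_ge0 : 0 <= A1) (A2_ge0 : 0 <= A2).
Hypothesis first_p1 : transferred_from pop C1 1 p1.

Lemma phase1_counts r : (1 <= r <= N1)%N ->
  has_counts pop (C1 r) r 0 0 /\ transferred_from pop C1 r p1.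
Proof.
elim: r => [//|r IH] /andP[_ r_lt].
have r_range : (1 <= r.+1 <= #|I| - 1)%N by size_lia.
case: r IH r_lt r_range => [|r] IH r_lt r_range.
  by split => //; apply: run_transfer r_range run_counts0 first_p1.
have [counts_r _] := IH (ltnW r_lt).
suff tr : transferred_from pop C1 r.+2 p1.
  by split => //; have := run_transfer r_range counts_r tr; rewrite /= !addn0 addn1.
apply: (run_greedy r_range); first by case: counts_r => /= ->.
have [after1 after2 after3] := dw_after_counts k x counts_r.
move=> b; case: (ord3P b) => -> // _ _; rewrite after1 ?after2 ?after3 /dw_counts -[r.+2%:R]natr1.
  by apply: (dwc_pop1_beats_pop2 popsizes_ge1 dists_gt0); rewrite ?ler1n ?natr1 ?ler_nat.
by apply: (dwc_pop1_beats_pop3 popsizes_ge1 dists_gt0); rewrite ?ler1n ?natr1 ?ler_nat.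
Qed.

Lemma phase1_transferred r : (1 <= r <= N1)%N -> transferred_from pop C1 r p1.
Proof. by case/phase1_counts. Qed.

Lemma phase1_increasing r : (1 <= r < N1)%N ->
  dwstar k x pop (C1 r) (C2 r) < dwstar k x pop (C1 r.+1) (C2 r.+1).
Proof.
case/andP=> r_ge1 r_lt.
have [|counts_r _] := @phase1_counts r; first by rewrite r_ge1 ltnW.
have [|counts_r1 _] := @phase1_counts r.+1; first by rewrite r_lt.
rewrite (run_value _ counts_r) ?(run_value _ counts_r1) ?r_ge1; try size_lia.
rewrite /dw_counts -natr1; apply: (dwc_pop1_increasing popsizes_ge1 dists_gt0) => //.
  by rewrite ler1n.
by rewrite natr1 ler_nat.
Qed.

Lemma second_pick_pop2 :
  (exists2 c, c \in C2 N1 :&: popset pop p2 &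
     forall c', c' \in C2 N1 ->
       dwstar k x pop (c' |: C1 N1) (C2 N1 :\ c') <= dwstar k x pop (c |: C1 N1) (C2 N1 :\ c))
  <-> 0 <= A3.
Proof.
have [|counts _] := @phase1_counts N1; first by rewrite pop_nonempty leqnn.
have [|C2N _] := run_state (_ : (N1 <= #|I| - 1)%N); first by size_lia.
have value c : c \notin C1 N1 ->
    dwstar k x pop (c |: C1 N1) (C2 N1 :\ c) = dw_after k x pop (C1 N1) (pop c).
  by apply: run_candidate; size_lia.
have [after1 after2 after3] := dw_after_counts k x counts.
have switch := dwc_second_pop2_ge_pop3 (d p1 p2) (d p1 p3) (d p2 p3) popsizes_ge1.
rewrite /dw_counts ?mulr0n ?mulr1n in after1 after2 after3.
rewrite -switch; split.
  case=> c /setIP[]; rewrite {1}C2N !inE => c_notin /eqP c_p2 c_max.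
  have [|c' c'_notin c'_p3] := popcount_ltP (_ : (popcount pop (C1 N1) p3 < N3)%N).
    by case: counts => _ _ ->.
  by have := c_max c'; rewrite {1}C2N inE c'_notin !value // c_p2 c'_p3 after2 after3; apply.
move=> A3_ge0.
have [|c c_notin c_p2] := popcount_ltP (_ : (popcount pop (C1 N1) p2 < N2)%N).
  by case: counts => _ -> _.
exists c; first by rewrite C2N !inE c_notin c_p2 /=.
move=> c'; rewrite {1}C2N inE => c'_notin; rewrite !value // c_p2 after2.
have := popcount_lt pop c'_notin; case: (ord3P (pop c')) => ->; rewrite ?after2 ?after3 //.
by case: counts => ->; rewrite ltnn.
Qed.

Section PhaseTwo.
Hypothesis A3_ge0 : 0 <= A3.
Hypothesis second_p2 : transferred_from pop C1 N1.+1 p2.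

Lemma phase2_counts s : (s <= N2)%N ->
  has_counts pop (C1 (N1 + s)) N1 s 0 /\ ((0 < s)%N -> transferred_from pop C1 (N1 + s) p2).
Proof.
elim: s => [|s IH] s_le.
  have [|counts _] := @phase1_counts N1; first by rewrite pop_nonempty leqnn.
  by rewrite addn0.
have [counts_s _] := IH (ltnW s_le).
have s_range : (1 <= (N1 + s).+1 <= #|I| - 1)%N by size_lia.
rewrite addnS; suff tr : transferred_from pop C1 (N1 + s).+1 p2.
  by split => //; have := run_transfer s_range counts_s tr; rewrite /= !addn0 addn1.
case: s IH s_le counts_s s_range => [|s] IH s_le counts_s s_range.
  by rewrite addn0; exact: second_p2.
apply: (run_greedy s_range); first by case: counts_s => _ /= ->.
have [after1 after2 after3] := dw_after_counts k x counts_s.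
move=> b; case: (ord3P b) => -> // _; first by case: counts_s => /= ->; rewrite ltnn.
move=> _; rewrite after2 after3 /dw_counts -[s.+2%:R]natr1.
by apply: (dwc_pop2_beats_pop3 popsizes_ge1 dists_gt0); rewrite ?ler1n ?natr1 ?ler_nat.
Qed.

Lemma phase2_transferred r : (N1 < r <= N1 + N2)%N -> transferred_from pop C1 r p2.
Proof.
case/andP=> r_gt r_le; have [|_] := @phase2_counts (r - N1); first by size_lia.
by rewrite subnKC ?(ltnW r_gt) //; apply; rewrite subn_gt0.
Qed.

Lemma phase2_convex r : (N1 < r < N1 + N2)%N ->
  2 * dwstar k x pop (C1 r) (C2 r)
    <= dwstar k x pop (C1 r.-1) (C2 r.-1) + dwstar k x pop (C1 r.+1) (C2 r.+1).
Proof.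
case/andP=> r_gt r_lt; have [s r_eq] : exists s, r = (N1 + s).+1.
  by exists (r - N1)%N.-1; size_lia.
subst r.
have [|counts0 _] := @phase2_counts s; first by size_lia.
have [|counts1 _] := @phase2_counts s.+1; first by size_lia.
have [|counts2 _] := @phase2_counts s.+2; first by size_lia.
rewrite !addnS in counts1 counts2.
rewrite (run_value _ counts0) ?(run_value _ counts1) ?(run_value _ counts2); try size_lia.
rewrite /dw_counts -[s.+2%:R]natr1 -[s.+1%:R]natr1.
have := dwc_pop2_convex popsizes_ge1 dists_gt0 (s := s%:R + 1).
rewrite addrK; apply; rewrite ?natr1 ?ler1n ?ler_nat //; size_lia.
Qed.

Lemma phase3_counts t : (N1 + N2 + t <= #|I| - 1)%N -> has_counts pop (C1 (N1 + N2 + t)) N1 N2 t.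
Proof.
elim: t => [|t IH] t_le; first by rewrite addn0; case: (phase2_counts (leqnn N2)).
rewrite addnS in t_le; have counts_t := IH (ltnW t_le).
have t_range : (1 <= (N1 + N2 + t).+1 <= #|I| - 1)%N by size_lia.
suff tr : transferred_from pop C1 (N1 + N2 + t).+1 p3.
  by rewrite addnS; have := run_transfer t_range counts_t tr; rewrite /= !addn0 addn1.
apply: (run_greedy t_range); first by case: counts_t => _ _ /= ->; size_lia.
by case: counts_t => c1 c2 _ b; case: (ord3P b) => -> //; rewrite ?c1 ?c2 ltnn.
Qed.

Lemma phase3_decreasing r : (N1 + N2 <= r)%N -> (r < N1 + N2 + N3 - 1)%N ->
  dwstar k x pop (C1 r.+1) (C2 r.+1) < dwstar k x pop (C1 r) (C2 r).
Proof.
move=> r_ge r_lt; have [t r_eq] : exists t, r = (N1 + N2 + t)%N.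
  by exists (r - (N1 + N2))%N; size_lia.
subst r.
have counts0 : has_counts pop (C1 (N1 + N2 + t)) N1 N2 t by apply: phase3_counts; size_lia.
have counts1 : has_counts pop (C1 (N1 + N2 + t).+1) N1 N2 t.+1.
  by rewrite -addnS; apply: phase3_counts; size_lia.
rewrite (run_value _ counts0) ?(run_value _ counts1); try size_lia.
rewrite /dw_counts -natr1.
by apply: (dwc_pop3_decreasing popsizes_ge1 dists_gt0); rewrite ?ler0n ?natr1 ?ltr_nat //; size_lia.
Qed.

End PhaseTwo.

End PhaseOne.

End BSRun.

Theorem lemma2 (R : realFieldType) (X : eqType) (k : X -> X -> R)
  (I : finType) (x : I -> X) (pop : I -> 'I_3) :
  char_kernel_fin k ->
  (forall a : 'I_3, (0 < popsize pop a)%N) ->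
  (forall a b : 'I_3, a != b -> exists z : X, emp_mass R x pop a z != emp_mass R x pop b z) ->
  let n1 := popsize pop p1 in
  let n2 := popsize pop p2 in
  let n3 := popsize pop p3 in
  let n := (n1 + n2 + n3)%N in
  let d12 := mmd2 k x (emp R pop p1) (emp R pop p2) in
  let d13 := mmd2 k x (emp R pop p1) (emp R pop p3) in
  let d23 := mmd2 k x (emp R pop p2) (emp R pop p3) in
  let dw := dwstar k x pop in
  let A1 := 0 <= (n2%:R - n1%:R) * d12 + n3%:R * (d13 - d23) in
  let A2 := 0 <= (n3%:R - n1%:R) * d13 + n2%:R * (d12 - d23) in
  let A3 := 0 <= n1%:R * (n2 + n3 - 1)%N%:R * (d13 - d12)
                 + (n3%:R - n2%:R) * (n1 + 1)%N%:R * d23 in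
  let D := [set: I] in
  (* (a), first part: an observation of population 1 is a maximizer at
     iteration 1 iff (A1) and (A2) *)
  ((exists2 c, c \in popset pop p1 &
      forall c', dw [set c'] (D :\ c') <= dw [set c] (D :\ c))
     <-> A1 /\ A2)
  /\
  (* (a), second part *)
  (A1 -> A2 -> forall C1 C2 : nat -> {set I}, BS_run k x pop D C1 C2 ->
     transferred_from pop C1 1 p1 ->
     (forall r, (1 <= r <= n1)%N -> transferred_from pop C1 r p1) /\
     (forall r, (1 <= r < n1)%N -> dw (C1 r) (C2 r) < dw (C1 r.+1) (C2 r.+1)))
  /\
  (* (b), first part *)
  (A1 -> A2 -> forall C1 C2 : nat -> {set I}, BS_run k x pop D C1 C2 ->
     transferred_from pop C1 1 p1 ->
     ((exists2 c, c \in C2 n1 :&: popset pop p2 &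
         forall c', c' \in C2 n1 ->
           dw (c' |: C1 n1) (C2 n1 :\ c') <= dw (c |: C1 n1) (C2 n1 :\ c))
      <-> A3))
  /\
  (* (b), second part *)
  (A1 -> A2 -> A3 -> forall C1 C2 : nat -> {set I}, BS_run k x pop D C1 C2 ->
     transferred_from pop C1 1 p1 -> transferred_from pop C1 n1.+1 p2 ->
     (forall r, (n1 < r <= n1 + n2)%N -> transferred_from pop C1 r p2) /\
     (forall r, (n1 < r < n1 + n2)%N ->
        2 * dw (C1 r) (C2 r) <= dw (C1 r.-1) (C2 r.-1) + dw (C1 r.+1) (C2 r.+1)))
  /\
  (* (c) *)
  (A1 -> A2 -> A3 -> forall C1 C2 : nat -> {set I}, BS_run k x pop D C1 C2 ->
     transferred_from pop C1 1 p1 -> transferred_from pop C1 n1.+1 p2 ->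
     (forall r, (n1 + n2 <= r)%N -> (r < n - 1)%N ->
        dw (C1 r.+1) (C2 r.+1) < dw (C1 r) (C2 r))).
Proof.
move=> [k_sym _ k_pos] pop_nonempty emp_distinct n1 n2 n3 n d12 d13 d23 dw A1 A2 A3 D.
rewrite /A1 /A2 /A3 /dw /D /n /d12 /d13 /d23 /n1 /n2 /n3 natrB ?natrD; last first.
  by rewrite addn_gt0 pop_nonempty.
split; first exact (first_pick_pop1 x pop_nonempty k_sym).
split=> [A1_ge0 A2_ge0 C1 C2 run first_p1 | ]; first split.
- exact (phase1_transferred pop_nonempty k_sym run k_pos emp_distinct A1_ge0 A2_ge0 first_p1).
- exact (phase1_increasing pop_nonempty k_sym run k_pos emp_distinct A1_ge0 A2_ge0 first_p1).
split=> [A1_ge0 A2_ge0 C1 C2 run first_p1 | ].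
  exact (second_pick_pop2 pop_nonempty k_sym run k_pos emp_distinct A1_ge0 A2_ge0 first_p1).
split=> A1_ge0 A2_ge0 A3_ge0 C1 C2 run first_p1 second_p2; first split.
- exact (phase2_transferred pop_nonempty k_sym run k_pos emp_distinct
           A1_ge0 A2_ge0 first_p1 A3_ge0 second_p2).
- exact (phase2_convex pop_nonempty k_sym run k_pos emp_distinct
           A1_ge0 A2_ge0 first_p1 A3_ge0 second_p2).
- exact (phase3_decreasing pop_nonempty k_sym run k_pos emp_distinct
           A1_ge0 A2_ge0 first_p1 A3_ge0 second_p2).
Qed.
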